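(* Let $q:G'\to G$ be an epimorphism of groups with finite abelian kernel $\Gamma$, let $W$ be a closed connected oriented surface of positive genus with $\pi=\pi_1(W)$ and first Betti number $b=2-\chi(W)$, and let $g:\pi\to G$ be an epimorphism. Then $g$ lifts to $G'$ (i.e. there is a homomorphism $g':\pi\to G'$ with $qg'=g$) if and only if $g_*([W])\in H_2(G;\mathbb{Z})$ lies in the image of $q_*:H_2(G';\mathbb{Z})\to H_2(G;\mathbb{Z})$. Moreover, if $g$ lifts to $G'$, then $$|\mathrm{Hom}_g(\pi,G')|=|\Gamma|^b\,|[\Gamma,G']|^{-1}.$$
   Context: $[W]\in H_2(W;\mathbb{Z})=H_2(\pi;\mathbb{Z})$ is the fundamental class. $\mathrm{Hom}_g(\pi,G')$ is the set of homomorphisms $g':\pi\to G'$ with $qg'=g$. $[\Gamma,G']$ is the subgroup of $\Gamma$ generated by commutators of elements of $\Gamma$ with elements of $G'$. *)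

From mathcomp Require Import all_boot ssralg ssrnum ssrint fingroup.
Set Implicit Arguments.
Unset Strict Implicit.
Unset Printing Implicit Defensive.
Import GRing.Theory.

Definition is_hom (G H : groupType) (f : G -> H) : Prop :=
  forall x y : G, f (x * y)%g = (f x * f y)%g.

Inductive gen_by (G : groupType) (S : G -> Prop) : G -> Prop :=
  | gen_one : gen_by S 1%g
  | gen_mem x : S x -> gen_by S x
  | gen_inv x : gen_by S x -> gen_by S x^-1%g
  | gen_mul x y : gen_by S x -> gen_by S y -> gen_by S (x * y)%g.

Definition card_is (T : eqType) (P : T -> Prop) (n : nat) : Prop :=
  exists s : seq T, [/\ uniq s, size s = n & forall x, x \in s <-> P x].

(* Integral group homology in degree 2 via the (inhomogeneous) bar    *)
(* complex  C_n(G) = Z[G^n],                                          *)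
(*   d[x] = 0,  d[x|y] = [y] - [xy] + [x],                            *)
(*   d[x|y|z] = [y|z] - [xy|z] + [x|yz] - [x|y],                      *)
(* so that H_2(G;Z) = ker d_2 / im d_3.  Chains are finite formal      *)
(* Z-linear combinations, represented as lists of (coefficient, cell).*)

Definition chain1 (G : groupType) := seq (int * G).
Definition chain2 (G : groupType) := seq (int * (G * G)).
Definition chain3 (G : groupType) := seq (int * (G * G * G)).

Definition coef (T : eqType) (c : seq (int * T)) (s : T) : int :=
  (\sum_(e <- c | e.2 == s) e.1)%R.

Definition bd2 (G : groupType) (c : chain2 G) : chain1 G :=
  flatten [seq [:: (e.1, e.2.2); (- e.1, e.2.1 * e.2.2)%g; (e.1, e.2.1)]%R
          | e <- c].

Definition bd3 (G : groupType) (c : chain3 G) : chain2 G :=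
  flatten [seq [:: (e.1, (e.2.1.2, e.2.2));
                   (- e.1, (e.2.1.1 * e.2.1.2, e.2.2)%g);
                   (e.1, (e.2.1.1, e.2.1.2 * e.2.2)%g);
                   (- e.1, (e.2.1.1, e.2.1.2))]%R
          | e <- c].

Definition cycle2 (G : groupType) (c : chain2 G) : Prop :=
  forall s : G, coef (bd2 c) s = 0%R.

Definition homologous2 (G : groupType) (c c' : chain2 G) : Prop :=
  exists B : chain3 G, forall s : G * G, (coef c s - coef c' s)%R = coef (bd3 B) s.

Definition chmap2 (G H : groupType) (f : G -> H) (c : chain2 G) : chain2 H :=
  [seq (e.1, (f e.2.1, f e.2.2)) | e <- c].

Definition in_image_H2 (G' G : groupType) (f : G' -> G) (c : chain2 G) : Prop :=
  exists z : chain2 G', cycle2 z /\ homologous2 (chmap2 f z) c.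

(* Closed oriented surface W of genus h >= 1:                          *)
(*   pi = pi_1(W) = < a_1,b_1,...,a_h,b_h | [a_1,b_1]...[a_h,b_h] >,   *)
(* with [x,y] = x^-1 y^-1 x y (MathComp's commutator).  A homomorphism *)
(* pi -> G is the same thing as a family (a_i, b_i) of elements of G   *)
(* satisfying the surface relation (images of the generators).        *)

Definition surface_rel (G : groupType) (h : nat) (a b : 'I_h -> G) : Prop :=
  foldr (fun i acc => [~ a i, b i] * acc)%g 1%g (enum 'I_h) = 1%g.

(* the relator word, letters (sign, generator-image); true = exponent +1 *)
Definition surface_word (G : groupType) (h : nat) (a b : 'I_h -> G)
  : seq (bool * G) :=
  flatten [seq [:: (false, a i); (false, b i); (true, a i); (true, b i)]
          | i <- enum 'I_h].

(* Fox-calculus 2-chain of a relator word read from the prefix p: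
   letter x^{+1} after prefix p contributes +[p|x],
   letter x^{-1} after prefix p contributes -[p x^-1 | x].
   Its boundary is sum_k eps_k [x_k] + [p] - [p * word]. *)
Fixpoint word_chain (G : groupType) (p : G) (w : seq (bool * G)) : chain2 G :=
  match w with
  | [::] => [::]
  | (true, x) :: w' => (1%R, (p, x)) :: word_chain (p * x)%g w'
  | (false, x) :: w' => ((-1)%R, (p * x^-1, x)%g) :: word_chain (p * x^-1)%g w'
  end.

(* g_*[W]: the image under g (given by the generator images a, b) of the
   standard 2-cycle representing the fundamental class [W] in
   H_2(pi;Z) = H_2(W;Z) (up to the sign fixed by the orientation). *)
Definition surface_class (G : groupType) (h : nat) (a b : 'I_h -> G) : chain2 G :=
  word_chain 1%g (surface_word a b).

(* l : 'I_h -> G' * G' is a lift g' of g (g' a_i = (l i).1, g' b_i = (l i).2):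
   it defines a homomorphism pi -> G' and q g' = g. *)
Definition is_lift (G' G : groupType) (q : G' -> G) (h : nat) (a b : 'I_h -> G)
  (l : {ffun 'I_h -> G' * G'}) : Prop :=
  surface_rel (fun i => (l i).1) (fun i => (l i).2) /\
  forall i, q (l i).1 = a i /\ q (l i).2 = b i.

(* Choose a set-theoretic section of q and let f be its factor set, a 2-cochain
   on G with values in the finite abelian kernel Gamma.  Modulo [Gamma, G'] the
   conjugation action of G' on Gamma is trivial, so f becomes a cocycle and its
   evaluation on 2-chains kills boundaries.  It also kills q_*-images of
   cycles of G', because the pull-back of f to G' is the coboundary of the
   defect of the section, and it sends g_*[W] to the product of commutators
   [x_1, y_1] ... [x_h, y_h] of any lifts x_i, y_i of the images of the
   generators.  Replacing the lifts by x_i c_i, y_i e_i with c_i, e_i in Gamma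
   multiplies that relator by F(c, e) for an additive F : Gamma^(2h) -> Gamma,
   whose image is exactly [Gamma, G'] since the a_i, b_i generate G.  Hence
   g_*[W] in im q_* forces a lift of g (a lift pushes the fundamental cycle
   into G', giving the converse), and the lifts form a coset of ker F, of size
   |Gamma|^(2h) / |[Gamma, G']|. *)

From HB Require Import structures.
From mathcomp Require Import all_boot ssralg ssrnum ssrint fingroup finalg.
Set Implicit Arguments. Unset Strict Implicit. Unset Printing Implicit Defensive.
Import GRing.Theory.

Section ChainEval.
Variables (T : eqType) (V : zmodType).
Implicit Types (c : seq (int * T)) (w : T -> V).
Local Open Scope ring_scope.

Definition chain_eval w c : V := \sum_(e <- c) w e.2 *~ e.1.

Lemma chain_eval_nil w : chain_eval w [::] = 0.
Proof. exact: big_nil. Qed.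

Lemma chain_eval_cons w e c : chain_eval w (e :: c) = w e.2 *~ e.1 + chain_eval w c.
Proof. exact: big_cons. Qed.

Lemma chain_eval_cat w c1 c2 :
  chain_eval w (c1 ++ c2) = chain_eval w c1 + chain_eval w c2.
Proof. exact: big_cat. Qed.

Lemma coef_nil (s : T) : coef [::] s = 0.
Proof. exact: big_nil. Qed.

Lemma coef_cons e c s : coef (e :: c) s = (if e.2 == s then e.1 else 0) + coef c s.
Proof. by rewrite /coef big_cons; case: ifP; rewrite ?add0r. Qed.

Lemma coef_cat c1 c2 s : coef (c1 ++ c2) s = coef c1 s + coef c2 s.
Proof. exact: big_cat. Qed.

Lemma chain_eval_coef w c (u : seq T) : uniq u -> {subset map snd c <= u} ->
  chain_eval w c = \sum_(t <- u) w t *~ coef c t.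
Proof.
move=> uu; elim: c => [|e c IHc] sub.
  by rewrite chain_eval_nil big1 // => t _; rewrite coef_nil mulr0z.
rewrite chain_eval_cons IHc; last by move=> t ct; apply: sub; rewrite inE ct orbT.
under [in RHS]eq_bigr => t _ do rewrite coef_cons mulrzDr.
rewrite big_split /=; congr (_ + _).
rewrite (bigD1_seq e.2) ?sub ?inE ?eqxx //= big1 ?addr0 // => t /negbTE.
by rewrite eq_sym => ->; rewrite mulr0z.
Qed.

Lemma eq_chain_eval w c1 c2 :
  (forall s, coef c1 s = coef c2 s) -> chain_eval w c1 = chain_eval w c2.
Proof.
move=> eq_c; have uu := undup_uniq (map snd (c1 ++ c2)).
rewrite !(chain_eval_coef w uu); first by apply: eq_bigr => t _; rewrite eq_c.
all: by move=> t ct; rewrite mem_undup map_cat mem_cat ct ?orbT.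
Qed.

Lemma chain_eval3 w n t1 t2 t3 :
  chain_eval w [:: (n, t1); (- n, t2); (n, t3)] = (w t1 - w t2 + w t3) *~ n.
Proof. by rewrite /chain_eval !big_cons big_nil /= !mulrNz !mulrzDl !mulNrz addr0 !addrA. Qed.

Lemma chain_eval4 w n t1 t2 t3 t4 :
  chain_eval w [:: (n, t1); (- n, t2); (n, t3); (- n, t4)] =
  (w t1 - w t2 + w t3 - w t4) *~ n.
Proof. by rewrite /chain_eval !big_cons big_nil /= !mulrNz !mulrzDl !mulNrz addr0 !addrA. Qed.

End ChainEval.

Lemma coef_chain_eval (T : eqType) (c : seq (int * T)) s :
  coef c s = chain_eval (fun t => (t == s)%:R%R : int) c.
Proof.
elim: c => [|e c IHc]; first by rewrite coef_nil chain_eval_nil.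
rewrite coef_cons chain_eval_cons IHc; congr (_ + _)%R.
by case: (e.2 == s); rewrite ?mul0rz // intz.
Qed.

Lemma if_eq_notin (I : eqType) (T : Type) (i : I) (r : seq I) (x : T) (f : I -> T) :
  i \notin r -> {in r, forall j, (if j == i then x else f j) = f j}.
Proof. by move=> ir j rj; case: eqP => // ji; rewrite -ji rj in ir. Qed.

Section Homomorphism.
Variables (H1 H2 : groupType) (f : H1 -> H2).
Hypothesis fM : is_hom f.

Lemma hom1 : f 1%g = 1%g.
Proof. by apply: (@mulgI _ (f 1%g)); rewrite -fM !mulg1. Qed.

Lemma homV x : f x^-1%g = (f x)^-1%g.
Proof. by apply: (@mulgI _ (f x)); rewrite -fM !mulgV hom1. Qed.

Lemma homJ x y : f (x ^ y)%g = (f x ^ f y)%g.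
Proof. by rewrite /conjg !fM homV. Qed.

Lemma homR x y : f [~ x, y]%g = [~ f x, f y]%g.
Proof. by rewrite /commg fM homV homJ. Qed.

End Homomorphism.

Section Words.
Variable H : groupType.
Implicit Types (p x : H) (w : seq (bool * H)).

Definition word_prod w : H :=
  foldr (fun e acc => (if e.1 then e.2 else e.2^-1) * acc)%g 1%g w.

Definition letter_sign (b : bool) : int := if b then 1%R else (-1)%R.

Lemma bd2_cons (e : int * (H * H)) c :
  bd2 (e :: c) = [:: (e.1, e.2.2); (- e.1, e.2.1 * e.2.2)%g; (e.1, e.2.1)]%R ++ bd2 c.
Proof. by []. Qed.

Lemma bd3_cons (e : int * (H * H * H)) c :
  bd3 (e :: c) = [:: (e.1, (e.2.1.2, e.2.2)); (- e.1, (e.2.1.1 * e.2.1.2, e.2.2)%g);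
                    (e.1, (e.2.1.1, e.2.1.2 * e.2.2)%g); (- e.1, (e.2.1.1, e.2.1.2))]%R
                 ++ bd3 c.
Proof. by []. Qed.

Lemma chain_eval_bd2_word_chain (V : zmodType) (f : H -> V) p w :
  chain_eval f (bd2 (word_chain p w)) =
  (f p - f (p * word_prod w)%g + \sum_(e <- w) f e.2 *~ letter_sign e.1)%R.
Proof.
elim: w p => [|[[] x] w IHw] p /=; rewrite ?chain_eval_nil ?big_nil ?mulg1 ?subrr ?addr0 //.
all: rewrite bd2_cons chain_eval_cat IHw big_cons !chain_eval_cons chain_eval_nil /= addr0.
  by rewrite mulgA !mulr1z mulrN1z (addrCA (f x)) -!addrA (addrCA (f p)) (addrCA (f x))
     addKr addrCA (addrCA (f x)).
by rewrite mulgVK mulgA opprK mulr1z !mulrN1z -!addrA addKr addrCA (addrCA (- f x)%R).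
Qed.

Definition comm_prod (I : Type) (r : seq I) (X Y : I -> H) : H :=
  foldr (fun i acc => [~ X i, Y i] * acc)%g 1%g r.

Lemma comm_prod_cons (I : Type) i r (X Y : I -> H) :
  comm_prod (i :: r) X Y = ([~ X i, Y i] * comm_prod r X Y)%g.
Proof. by []. Qed.

Lemma eq_comm_prod (I : Type) r (X Y X' Y' : I -> H) :
  X =1 X' -> Y =1 Y' -> comm_prod r X Y = comm_prod r X' Y'.
Proof. by move=> eX eY; elim: r => [|i r IHr] //=; rewrite IHr eX eY. Qed.

Variable h : nat.
Implicit Types a b : 'I_h -> H.

Lemma surface_word_letters (V : zmodType) (f : H -> V) a b :
  (\sum_(e <- surface_word a b) f e.2 *~ letter_sign e.1)%R = 0%R.
Proof.
rewrite /surface_word; elim: (enum 'I_h) => [|i r IHr] /=; first by rewrite big_nil.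
by rewrite !big_cons IHr /= !mulrN1z !mulr1z addr0 addrCA addKr addNr.
Qed.

Lemma word_prod_surface_word a b :
  word_prod (surface_word a b) = comm_prod (enum 'I_h) a b.
Proof.
rewrite /surface_word /comm_prod; elim: (enum 'I_h) => [|i r IHr] //=.
by rewrite IHr /commg /conjg !mulgA.
Qed.

End Words.

Lemma chmap2_word_chain (H1 H2 : groupType) (f : H1 -> H2) p w : is_hom f ->
  chmap2 f (word_chain p w) = word_chain (f p) [seq (e.1, f e.2) | e <- w].
Proof.
move=> fM; elim: w p => [|[[] x] w IHw] p //=; by rewrite IHw fM ?(homV fM).
Qed.

Lemma map_surface_word (H1 H2 : groupType) (f : H1 -> H2) h (a b : 'I_h -> H1) :
  [seq (e.1, f e.2) | e <- surface_word a b] =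
  surface_word (fun i => f (a i)) (fun i => f (b i)).
Proof. by rewrite /surface_word map_flatten -map_comp. Qed.

Lemma hom_comm_prod (H1 H2 : groupType) (f : H1 -> H2) (I : Type) r (X Y : I -> H1) :
  is_hom f -> f (comm_prod r X Y) = comm_prod r (fun i => f (X i)) (fun i => f (Y i)).
Proof. by move=> fM; elim: r => [|i r IHr] /=; rewrite ?(hom1 fM) // fM (homR fM) IHr. Qed.

Lemma cycle2_eval_bd2 (H : groupType) (V : zmodType) (f : H -> V) (z : chain2 H) :
  cycle2 z -> chain_eval f (bd2 z) = 0%R.
Proof.
by move=> zc; rewrite (@eq_chain_eval _ _ f _ [::]) ?chain_eval_nil // => s; rewrite zc coef_nil.
Qed.

Lemma lift_in_image_H2 (G G' : groupType) (q : G' -> G) h (a b : 'I_h -> G) l :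
  is_hom q -> is_lift q a b l -> in_image_H2 q (surface_class a b).
Proof.
move=> qM [lrel ql]; pose X i := (l i).1; pose Y i := (l i).2.
exists (word_chain 1%g (surface_word X Y)); split.
  move=> s; rewrite coef_chain_eval chain_eval_bd2_word_chain.
  rewrite (surface_word_letters (fun t => (t == s)%:R%R : int)) addr0 mul1g.
  by rewrite word_prod_surface_word [comm_prod _ _ _]lrel subrr.
exists [::] => s; rewrite (chmap2_word_chain _ _ qM) map_surface_word (hom1 qM).
have -> : surface_word (fun i => q (X i)) (fun i => q (Y i)) = surface_word a b.
  by congr flatten; apply: eq_map => i; rewrite /X /Y !(proj1 (ql i)) !(proj2 (ql i)).
by rewrite subrr coef_nil.
Qed.

Section AdditiveFibres.
Variables (D V : finZmodType) (F : D -> V).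
Hypothesis FD : {morph F : u v / (u + v)%R}.
Local Open Scope ring_scope.

Lemma additive_fibre_shift v0 :
  (fun u => v0 + u) @: [set u | F u == 0] = [set v | F v == F v0].
Proof.
have F0 : F 0 = 0 by apply: (@addrI _ (F 0)); rewrite -FD !addr0.
have FN u : F (- u) = - F u by apply/eqP; rewrite -addr_eq0 -FD addNr F0.
apply/setP => v; rewrite inE; apply/imsetP/eqP => [[u] | Fv].
  by rewrite inE => /eqP Fu ->; rewrite FD Fu addr0.
exists (- v0 + v); last by rewrite addNKr.
by rewrite inE FD FN Fv addNr.
Qed.

Lemma card_additive_fibre v0 : #|[set v | F v == F v0]| = #|[set u | F u == 0]|.
Proof. by rewrite -additive_fibre_shift card_imset //; apply: addrI. Qed.

Lemma card_additive_domain :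
  #|D| = (#|[set F v | v : D]| * #|[set u | F u == 0%R]|)%N.
Proof.
rewrite -sum_nat_const -[LHS]sum1_card (partition_big_imset F) /=.
apply: eq_bigr => _ /imsetP [v0 _ ->]; rewrite -(card_additive_fibre v0) sum1_card.
by apply: eq_card => v; rewrite !inE.
Qed.

End AdditiveFibres.

Section Kernel.
Variables (G G' : groupType) (q : G' -> G) (sG : seq G').
Hypothesis qM : is_hom q.
Hypothesis kerq_abelian : forall x y : G', q x = 1%g -> q y = 1%g -> (x * y = y * x)%g.
Hypothesis mem_sG : forall x, x \in sG <-> q x = 1%g.

Local Notation inker x := (q x = 1%g).

Lemma kerq1 : inker 1%g.
Proof. exact: hom1. Qed.

Lemma kerqM x y : inker x -> inker y -> inker (x * y)%g.
Proof. by move=> kx ky; rewrite qM kx ky mulg1. Qed.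

Lemma kerqV x : inker x -> inker x^-1%g.
Proof. by move=> kx; rewrite (homV qM) kx invg1. Qed.

Lemma kerqJ x y : inker x -> inker (x ^ y)%g.
Proof. by move=> kx; rewrite (homJ qM) kx conj1g. Qed.

Lemma kerqR x y : inker x -> inker [~ x, y]%g.
Proof. by move=> kx; apply: kerqM; [apply: kerqV | apply: kerqJ]. Qed.

Lemma kerq_conj c u v : inker c -> q u = q v -> (c ^ u = c ^ v)%g.
Proof.
move=> kc quv; have kuv : inker (u^-1 * v)%g by rewrite qM (homV qM) quv mulVg.
rewrite -(mulKVg u v) conjgM; apply/esym/conjg_fixP/commgP.
exact: kerq_abelian (kerqJ u kc) kuv.
Qed.

Definition kernel := seq_sub sG.
HB.instance Definition _ := Finite.on kernel.

Lemma kerq_val (u : kernel) : inker (val u).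
Proof. exact/mem_sG/valP. Qed.

Lemma mem_sG1 : (1%g : G') \in sG.
Proof. exact/mem_sG/kerq1. Qed.

Definition kernel_mul (u v : kernel) : kernel := insubd u (val u * val v)%g.
Definition kernel_inv (u : kernel) : kernel := insubd u (val u)^-1%g.

Lemma val_kernel_mul u v : val (kernel_mul u v) = (val u * val v)%g.
Proof. by rewrite insubdK //; apply/mem_sG/kerqM; apply: kerq_val. Qed.

Lemma val_kernel_inv u : val (kernel_inv u) = (val u)^-1%g.
Proof. by rewrite insubdK //; apply/mem_sG/kerqV/kerq_val. Qed.

Lemma kernel_mulA : associative kernel_mul.
Proof. by move=> u v w; apply: val_inj; rewrite !val_kernel_mul mulgA. Qed.

Lemma kernel_mulC : commutative kernel_mul.
Proof. by move=> u v; apply: val_inj; rewrite !val_kernel_mul kerq_abelian ?kerq_val. Qed.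

Lemma kernel_mul1 : left_id (SeqSub mem_sG1) kernel_mul.
Proof. by move=> u; apply: val_inj; rewrite val_kernel_mul mul1g. Qed.

Lemma kernel_mulV : left_inverse (SeqSub mem_sG1) kernel_inv kernel_mul.
Proof. by move=> u; apply: val_inj; rewrite val_kernel_mul val_kernel_inv mulVg. Qed.

HB.instance Definition _ :=
  GRing.isZmodule.Build kernel kernel_mulA kernel_mulC kernel_mul1 kernel_mulV.

Local Open Scope ring_scope.
Implicit Types (u v d : kernel) (g : G').

Lemma val_kernelD u v : val (u + v) = (val u * val v)%g.
Proof. exact: val_kernel_mul. Qed.

Lemma val_kernelN u : val (- u) = (val u)^-1%g.
Proof. exact: val_kernel_inv. Qed.

Definition to_kernel (x : G') : kernel := insubd (0 : kernel) x.

Lemma val_to_kernel x : inker x -> val (to_kernel x) = x.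
Proof. by move=> kx; rewrite insubdK //; apply/mem_sG. Qed.

Lemma to_kernel_val u : to_kernel (val u) = u.
Proof. by apply: val_inj; rewrite val_to_kernel ?kerq_val. Qed.

Lemma to_kernelM x y : inker x -> inker y -> to_kernel (x * y)%g = to_kernel x + to_kernel y.
Proof.
by move=> kx ky; apply: val_inj; rewrite val_kernelD !val_to_kernel //; apply: kerqM.
Qed.

Lemma to_kernelV x : inker x -> to_kernel x^-1%g = - to_kernel x.
Proof. by move=> kx; apply: val_inj; rewrite val_kernelN !val_to_kernel //; apply: kerqV. Qed.

Lemma to_kernel1 : to_kernel 1%g = 0.
Proof. by apply: val_inj; rewrite val_to_kernel //; apply: kerq1. Qed.

Definition kconj g u : kernel := to_kernel (val u ^ g)%g.

Lemma val_kconj g u : val (kconj g u) = (val u ^ g)%g.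
Proof. by rewrite val_to_kernel //; apply/kerqJ/kerq_val. Qed.

Lemma kconjD g u v : kconj g (u + v) = kconj g u + kconj g v.
Proof. by apply: val_inj; rewrite !(val_kernelD, val_kconj) conjMg. Qed.

Lemma kconjN g u : kconj g (- u) = - kconj g u.
Proof. by apply: val_inj; rewrite !(val_kernelN, val_kconj) conjVg. Qed.

Lemma kconj0 g : kconj g 0 = 0.
Proof. by apply: val_inj; rewrite val_kconj conj1g. Qed.

Lemma kconj1 u : kconj 1%g u = u.
Proof. by apply: val_inj; rewrite val_kconj conjg1. Qed.

Lemma kconjM g k u : kconj (g * k)%g u = kconj k (kconj g u).
Proof. by apply: val_inj; rewrite !val_kconj conjgM. Qed.

Lemma kconjK g u : kconj g^-1%g (kconj g u) = u.
Proof. by rewrite -kconjM mulgV kconj1. Qed.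

Lemma kconjVK g u : kconj g (kconj g^-1%g u) = u.
Proof. by rewrite -kconjM mulVg kconj1. Qed.

Lemma kconj_q g k u : q g = q k -> kconj g u = kconj k u.
Proof. by move=> qgk; apply: val_inj; rewrite !val_kconj (kerq_conj (kerq_val u) qgk). Qed.

Definition kercomm (x : G') := exists c y : G', inker c /\ x = [~ c, y]%g.
Definition in_comm u := gen_by kercomm (val u).

Lemma kercomm_kerq x : gen_by kercomm x -> inker x.
Proof.
elim=> [|y [c [k [kc ->]]]|y _|y z _ ky _ kz]; first exact: kerq1.
- exact: kerqR.
- exact: kerqV.
- exact: kerqM.
Qed.

Lemma in_comm0 : in_comm 0.
Proof. exact: gen_one. Qed.

Lemma in_commD u v : in_comm u -> in_comm v -> in_comm (u + v).
Proof. by rewrite /in_comm val_kernelD; apply: gen_mul. Qed.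

Lemma in_commN u : in_comm u -> in_comm (- u).
Proof. by rewrite /in_comm val_kernelN; apply: gen_inv. Qed.

Lemma in_commB u v : in_comm u -> in_comm v -> in_comm (u - v).
Proof. by move=> cu cv; apply/in_commD/in_commN. Qed.

Lemma in_commMz u n : in_comm u -> in_comm (u *~ n).
Proof.
move=> cu; have cMn (m : nat) : in_comm (u *+ m).
  by elim: m => [|m IHm]; [apply: in_comm0 | rewrite mulrS; apply: in_commD].
by case: n => m; rewrite ?NegzE ?mulrNz; [|apply: in_commN]; apply: cMn.
Qed.

Lemma in_comm_kconj g u : in_comm u -> in_comm (kconj g u).
Proof.
rewrite /in_comm val_kconj.
elim=> [|y [c [k [kc ->]]]|y _|y z _ cy _ cz].
- by rewrite conj1g; apply: gen_one.
- rewrite conjRg; apply: gen_mem; exists (c ^ g)%g, (k ^ g)%g.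
  by split=> //; apply: kerqJ.
- by rewrite conjVg; apply: gen_inv.
- by rewrite conjMg; apply: gen_mul.
Qed.

Lemma in_comm_twist g d : in_comm (- d + kconj g d).
Proof.
rewrite /in_comm val_kernelD val_kernelN val_kconj; apply: gen_mem.
by exists (val d), g; split=> //; apply: kerq_val.
Qed.

Section Lifts.
Hypothesis q_surj : forall x : G, exists y : G', q y = x.

Lemma q_surjb x : exists y : G', q y == x.
Proof. by have [y qy] := q_surj x; exists y; apply/eqP. Qed.

Definition sect (x : G) : G' := xchoose (q_surjb x).

Lemma sectK x : q (sect x) = x.
Proof. exact/eqP/(xchooseP (q_surjb x)). Qed.

Lemma kerq_factor x y : inker (sect x * sect y * (sect (x * y))^-1)%g.
Proof. by rewrite !qM (homV qM) !sectK mulgV. Qed.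

Lemma kerq_defect g : inker (sect (q g) * g^-1)%g.
Proof. by rewrite qM (homV qM) sectK mulgV. Qed.

Definition factor_set (xy : G * G) : kernel :=
  to_kernel (sect xy.1 * sect xy.2 * (sect (xy.1 * xy.2))^-1)%g.

Definition sect_defect g : kernel := to_kernel (sect (q g) * g^-1)%g.

Lemma factor_set_cocycle x y z :
  factor_set (x, y) + factor_set ((x * y)%g, z) =
  kconj (sect x)^-1 (factor_set (y, z)) + factor_set (x, (y * z)%g).
Proof.
apply: val_inj; rewrite !val_kernelD val_kconj /factor_set /= !val_to_kernel ?kerq_factor //.
by rewrite /conjg invgK !mulgA !mulgVK.
Qed.

Lemma factor_set_defect g k :
  factor_set (q g, q k) + sect_defect (g * k)%g =
  sect_defect g + kconj g^-1 (sect_defect k).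
Proof.
apply: val_inj; rewrite !val_kernelD val_kconj /factor_set /sect_defect /=.
rewrite !val_to_kernel ?kerq_factor ?kerq_defect //.
by rewrite /conjg invgK qM !invMg !mulgA !mulgVK.
Qed.

Lemma in_comm_factor_bd3 (B : chain3 G) : in_comm (chain_eval factor_set (bd3 B)).
Proof.
elim: B => [|[n [[x y] z]] B IHB]; first by rewrite chain_eval_nil; apply: in_comm0.
rewrite bd3_cons chain_eval_cat chain_eval4 /=; apply: in_commD => //; apply: in_commMz.
have -> : factor_set (y, z) - factor_set ((x * y)%g, z) + factor_set (x, (y * z)%g)
          - factor_set (x, y) = - (- factor_set (y, z) + kconj (sect x)^-1 (factor_set (y, z))).
  rewrite addrAC -(addrA (factor_set _)) -opprD (addrC (factor_set ((x * y)%g, z))).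
  by rewrite factor_set_cocycle opprD addrA subrK opprD opprK.
exact/in_commN/in_comm_twist.
Qed.

Lemma in_comm_factor_chmap2 (z : chain2 G') :
  in_comm (chain_eval factor_set (chmap2 q z) - chain_eval sect_defect (bd2 z)).
Proof.
elim: z => [|[n [g k]] z IHz].
  by rewrite !chain_eval_nil subrr; apply: in_comm0.
rewrite bd2_cons chain_eval_cat /= chain_eval_cons chain_eval3 /= opprD addrACA.
apply: in_commD => //; rewrite -mulrzBl; apply: in_commMz.
have := factor_set_defect g k.
move: (factor_set _) (sect_defect g) (sect_defect k) (sect_defect _) => w d1 d2 d12 e.
rewrite -[w](addrK d12) e opprD opprB !addrA subrK (addrC d1) addrAC addrK addrC.
exact: in_comm_twist.
Qed.

Variables (h : nat) (a b : 'I_h -> G) (X Y : 'I_h -> G').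
Hypotheses (qX : forall i, q (X i) = a i) (qY : forall i, q (Y i) = b i).
Hypothesis surface_rel_ab : surface_rel a b.

Local Notation relator := (comm_prod (enum 'I_h) X Y).

Lemma kerq_comm_prod : inker relator.
Proof.
by rewrite (hom_comm_prod _ _ _ qM) -[RHS]surface_rel_ab; apply: eq_comm_prod.
Qed.

Lemma chmap2_surface_chain :
  chmap2 q (word_chain 1%g (surface_word X Y)) = surface_class a b.
Proof.
rewrite (chmap2_word_chain _ _ qM) map_surface_word (hom1 qM) /surface_class.
by congr word_chain; congr flatten; apply: eq_map => i; rewrite qX qY.
Qed.

Lemma in_comm_surface_class :
  in_comm (chain_eval factor_set (surface_class a b) - to_kernel relator).
Proof.
have := in_comm_factor_chmap2 (word_chain 1%g (surface_word X Y)).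
rewrite chmap2_surface_chain chain_eval_bd2_word_chain surface_word_letters addr0.
rewrite mul1g word_prod_surface_word.
suff -> : sect_defect 1%g - sect_defect relator = to_kernel relator by [].
have ks1 : inker (sect 1%g) by rewrite sectK.
rewrite /sect_defect kerq_comm_prod (hom1 qM) invg1 mulg1.
rewrite to_kernelM ?kerqV ?kerq_comm_prod // opprD addrA subrr add0r.
by rewrite to_kernelV ?kerq_comm_prod // opprK.
Qed.

Lemma in_image_H2_in_comm :
  in_image_H2 q (surface_class a b) -> in_comm (to_kernel relator).
Proof.
case=> z [z_cycle [B zB]].
have comm_z : in_comm (chain_eval factor_set (chmap2 q z)).
  by have := in_comm_factor_chmap2 z; rewrite cycle2_eval_bd2 // subr0.
have comm_W : in_comm (chain_eval factor_set (surface_class a b)).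
  have -> : chain_eval factor_set (surface_class a b) =
            chain_eval factor_set (chmap2 q z) - chain_eval factor_set (bd3 B).
    rewrite (@eq_chain_eval _ _ _ (chmap2 q z) (surface_class a b ++ bd3 B)).
      by rewrite chain_eval_cat addrK.
    by move=> s; rewrite coef_cat -zB addrC subrK.
  exact/in_commB/in_comm_factor_bd3.
rewrite -[to_kernel _](subKr (chain_eval factor_set (surface_class a b))).
exact/in_commB/in_comm_surface_class.
Qed.

Definition change_step i (c e : kernel) : kernel :=
  (- c + kconj ((X i)^-1 * Y i * X i) c) + (- kconj (X i) e + kconj [~ X i, Y i]^-1 e).

Lemma change_stepP i c e :
  (val (change_step i c e) * [~ X i, Y i])%g = [~ X i * val c, Y i * val e]%g.
Proof.
rewrite /change_step addrA (addrAC _ _ (- kconj (X i) e)) !val_kernelD !val_kernelN !val_kconj.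
by rewrite /commg /conjg !invMg !invgK !mulgA ?(mulgK, mulgVK).
Qed.

Lemma change_stepD i c c' e e' :
  change_step i (c + c') (e + e') = change_step i c e + change_step i c' e'.
Proof.
by rewrite /change_step !kconjD !opprD [X in X + _ = _]addrACA [X in _ + X = _]addrACA
   [LHS]addrACA.
Qed.

Lemma change_step0 i : change_step i 0 0 = 0.
Proof. by rewrite /change_step !kconj0 oppr0 !addr0. Qed.

(* Changing the lift of (a_i, b_i) from (X_i, Y_i) to (X_i c_i, Y_i e_i),
   for i in r, multiplies the relator by [lift_change r c e]. *)
Definition lift_change (r : seq 'I_h) (c e : 'I_h -> kernel) : kernel :=
  foldr (fun i acc => change_step i (c i) (e i) + kconj [~ X i, Y i]^-1 acc) 0 r.

Lemma lift_change_cons i r c e :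
  lift_change (i :: r) c e =
  change_step i (c i) (e i) + kconj [~ X i, Y i]^-1 (lift_change r c e).
Proof. by []. Qed.

Lemma comm_prod_change r c e :
  comm_prod r (fun i => X i * val (c i))%g (fun i => Y i * val (e i))%g =
  (val (lift_change r c e) * comm_prod r X Y)%g.
Proof.
elim: r => [|i r IHr]; first by rewrite /= mulg1.
rewrite !comm_prod_cons lift_change_cons IHr -change_stepP val_kernelD val_kconj.
rewrite /conjg invgK.
by rewrite /commg /conjg !invMg !invgK !mulgA ?(mulgK, mulgVK).
Qed.

Lemma lift_changeD r c c' e e' :
  lift_change r (fun j => c j + c' j) (fun j => e j + e' j) =
  lift_change r c e + lift_change r c' e'.
Proof. by elim: r => [|i r IHr] /=; rewrite ?addr0 // IHr change_stepD kconjD addrACA. Qed.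

Lemma eq_lift_change r c c' e e' :
  {in r, c =1 c'} -> {in r, e =1 e'} -> lift_change r c e = lift_change r c' e'.
Proof.
elim: r => [|i r IHr] //= cc' ee'.
rewrite cc' ?ee' ?mem_head // IHr // => j rj; [apply: cc' | apply: ee'];
  by rewrite inE rj orbT.
Qed.

Lemma lift_change0 r : lift_change r (fun=> 0) (fun=> 0) = 0.
Proof. by elim: r => [|i r IHr] //=; rewrite IHr kconj0 change_step0 addr0. Qed.

Lemma lift_change_eq0 r c e :
  {in r, forall j, c j = 0} -> {in r, forall j, e j = 0} -> lift_change r c e = 0.
Proof. by move=> c0 e0; rewrite (eq_lift_change c0 e0) lift_change0. Qed.

Lemma lift_changeN r c e :
  lift_change r (fun j => - c j) (fun j => - e j) = - lift_change r c e.
Proof.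
apply/eqP; rewrite -addr_eq0 addrC -lift_changeD lift_change_eq0 // => j _;
  exact: subrr.
Qed.

Lemma in_comm_lift_change r c e : in_comm (lift_change r c e).
Proof.
elim: r => [|i r IHr] /=; first exact: in_comm0.
apply/in_commD/in_comm_kconj => //; apply/in_commD; first exact: in_comm_twist.
by rewrite -{2}(kconjK (X i) (e i)) -kconjM; apply: in_comm_twist.
Qed.

Definition in_change_image r u := exists c e, lift_change r c e = u.

Lemma in_change_image0 r : in_change_image r 0.
Proof. by exists (fun=> 0), (fun=> 0); rewrite lift_change0. Qed.

Lemma in_change_imageD r u v :
  in_change_image r u -> in_change_image r v -> in_change_image r (u + v).
Proof.
case=> c [e <-] [c' [e' <-]].
by exists (fun j => c j + c' j), (fun j => e j + e' j); rewrite lift_changeD.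
Qed.

Lemma in_change_imageN r u : in_change_image r u -> in_change_image r (- u).
Proof.
by case=> c [e <-]; exists (fun j => - c j), (fun j => - e j); rewrite lift_changeN.
Qed.

Definition twist_in_image r g := forall d, in_change_image r (- d + kconj g d).

Lemma twist_in_image1 r : twist_in_image r 1%g.
Proof. by move=> d; rewrite kconj1 addNr; apply: in_change_image0. Qed.

Lemma twist_in_imageM r g k :
  twist_in_image r g -> twist_in_image r k -> twist_in_image r (g * k)%g.
Proof.
move=> tg tk d; rewrite kconjM.
have -> : - d + kconj k (kconj g d) = (- d + kconj g d) + (- kconj g d + kconj k (kconj g d)).
  by rewrite addrA addrK.
exact: in_change_imageD.
Qed.

Lemma twist_in_imageV r g : twist_in_image r g -> twist_in_image r g^-1%g.
Proof.
move=> tg d; have := in_change_imageN (tg (kconj g^-1 d)).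
by rewrite kconjVK opprD opprK addrC.
Qed.

Lemma twist_in_image_q r g k : q g = q k -> twist_in_image r g -> twist_in_image r k.
Proof. by move=> qgk tg d; rewrite -(kconj_q d qgk). Qed.

Lemma twist_in_image_conj r w g :
  twist_in_image r w -> twist_in_image r (w * g * w^-1)%g -> twist_in_image r g.
Proof.
move=> tw twg; have -> : g = (w^-1 * (w * g * w^-1) * w)%g.
  by rewrite !mulgA mulVg mul1g mulgVK.
exact/twist_in_imageM/tw/twist_in_imageM/twg/twist_in_imageV.
Qed.

Lemma twist_in_image_cons i r g : i \notin r -> twist_in_image r g ->
  twist_in_image (i :: r) ([~ X i, Y i] * g * [~ X i, Y i]^-1)%g.
Proof.
move=> ir tg d; have [c [e ce]] := tg (kconj [~ X i, Y i] d).
exists (fun j => if j == i then 0 else c j), (fun j => if j == i then 0 else e j).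
rewrite lift_change_cons eqxx change_step0 add0r.
rewrite (eq_lift_change (if_eq_notin 0 c ir) (if_eq_notin 0 e ir)) ce.
by rewrite kconjD kconjN kconjK -!kconjM mulgA.
Qed.

Lemma twist_in_image_head i r : i \notin r ->
  twist_in_image (i :: r) (X i) /\ twist_in_image (i :: r) (Y i).
Proof.
move=> ir; set u := ((X i)^-1 * Y i * X i)%g; set v := ((X i)^-1 * [~ X i, Y i]^-1)%g.
have only_i (d : kernel) : {in r, forall j, (if j == i then d else 0) = 0}.
  exact: (if_eq_notin d (fun=> 0) ir).
have tu : twist_in_image (i :: r) u.
  move=> d; exists (fun j => if j == i then d else 0), (fun=> 0).
  rewrite lift_change_cons eqxx lift_change_eq0 //.
  by rewrite kconj0 addr0 /change_step !kconj0 oppr0 !addr0.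
have tv : twist_in_image (i :: r) v.
  move=> d; exists (fun=> 0), (fun j => if j == i then kconj (X i)^-1 d else 0).
  rewrite lift_change_cons eqxx lift_change_eq0 //.
  by rewrite kconj0 addr0 /change_step kconj0 oppr0 !add0r kconjVK -kconjM.
have tXV : twist_in_image (i :: r) (X i)^-1%g.
  have -> : (X i)^-1%g = (u * v * u^-1)%g.
    by rewrite /u /v /commg /conjg !invMg !invgK !mulgA ?(mulgK, mulgVK).
  exact/twist_in_imageM/twist_in_imageV/tu/twist_in_imageM/tv.
have tX := twist_in_imageV tXV; rewrite invgK in tX; split=> //.
have -> : Y i = (X i * u * (X i)^-1)%g by rewrite /u !mulgA mulgK mulgV mul1g.
exact/twist_in_imageM/tXV/twist_in_imageM/tu.
Qed.

Lemma twist_in_image_gens r j : uniq r -> j \in r ->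
  twist_in_image r (X j) /\ twist_in_image r (Y j).
Proof.
elim: r => [|i r IHr] //= /andP [ir r_uniq].
have [tX tY] := twist_in_image_head ir.
have tc : twist_in_image (i :: r) [~ X i, Y i].
  rewrite /commg /conjg; apply: twist_in_imageM (twist_in_imageV tX) _.
  exact: twist_in_imageM (twist_in_imageV tY) (twist_in_imageM tX tY).
rewrite inE; case: eqP => [-> _ | _ /= jr]; first by split.
have [tXj tYj] := IHr r_uniq jr.
by split; apply: (twist_in_image_conj tc); apply: twist_in_image_cons.
Qed.

Hypothesis generates_ab : forall x : G, gen_by (fun y => exists i, y = a i \/ y = b i) x.

Lemma twist_in_image_all g : twist_in_image (enum 'I_h) g.
Proof.
have [x gen_x qg] : exists2 x, gen_by (fun y => exists i, y = a i \/ y = b i) x & q g = x.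
  by exists (q g).
elim: gen_x g qg => {x} [|x [i [->|->]]|x _ IHx|x y _ IHx _ IHy] g qg.
- by apply: (@twist_in_image_q _ 1%g) (twist_in_image1 _); rewrite qg kerq1.
- apply: (@twist_in_image_q _ (X i)); first by rewrite qg qX.
  exact: (twist_in_image_gens (enum_uniq _) (mem_enum _ i)).1.
- apply: (@twist_in_image_q _ (Y i)); first by rewrite qg qY.
  exact: (twist_in_image_gens (enum_uniq _) (mem_enum _ i)).2.
- by rewrite -[g]invgK; apply/twist_in_imageV/IHx; rewrite (homV qM) qg invgK.
- have [[gx qgx] [gy qgy]] := (q_surj x, q_surj y).
  apply: (@twist_in_image_q _ (gx * gy)%g); first by rewrite qM qgx qgy qg.
  exact: twist_in_imageM (IHx _ qgx) (IHy _ qgy).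
Qed.

Lemma comm_in_change_image x :
  gen_by kercomm x -> in_change_image (enum 'I_h) (to_kernel x).
Proof.
elim=> [|y [c [k [kc ->]]]|y cy IHy|y z cy IHy cz IHz].
- by rewrite to_kernel1; apply: in_change_image0.
- have -> : to_kernel [~ c, k]%g = - to_kernel c + kconj k (to_kernel c).
    apply: val_inj; rewrite val_kernelD val_kernelN val_kconj !val_to_kernel //.
    exact: kerqR.
  exact: twist_in_image_all.
- by rewrite to_kernelV; [apply: in_change_imageN | apply: kercomm_kerq].
- by rewrite to_kernelM; [apply: in_change_imageD | apply: kercomm_kerq ..].
Qed.

Definition lift_shift := {ffun 'I_h -> kernel * kernel}.
HB.instance Definition _ := Finite.on lift_shift.
HB.instance Definition _ := GRing.Zmodule.on lift_shift.

Definition lift_of (v : lift_shift) : {ffun 'I_h -> G' * G'} :=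
  [ffun i => (X i * val (v i).1, Y i * val (v i).2)%g].

Definition change_map (v : lift_shift) : kernel :=
  lift_change (enum 'I_h) (fun i => (v i).1) (fun i => (v i).2).

Lemma change_mapD : {morph change_map : s t / s + t}.
Proof.
by move=> s t; rewrite /change_map -lift_changeD; apply: eq_lift_change => i _; rewrite ffunE.
Qed.

Lemma is_lift_of (v : lift_shift) :
  is_lift q a b (lift_of v) <-> change_map v = - to_kernel relator.
Proof.
have rel_lift :
    comm_prod (enum 'I_h) (fun i => (lift_of v i).1) (fun i => (lift_of v i).2) =
    (val (change_map v) * relator)%g.
  by rewrite -comm_prod_change; apply: eq_comm_prod => i; rewrite ffunE.
have val_rel : val (- to_kernel relator) = relator^-1%g.
  by rewrite val_kernelN val_to_kernel ?kerq_comm_prod.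
split=> [[lift_rel _] | cv].
  by apply/val_inj/(mulIg relator); rewrite val_rel -rel_lift mulVg.
split; first by apply: etrans rel_lift _; rewrite cv val_rel mulVg.
by move=> i; rewrite ffunE /= !qM !kerq_val !mulg1 qX qY.
Qed.

Definition lift_diff (l : {ffun 'I_h -> G' * G'}) : lift_shift :=
  [ffun i => (to_kernel ((X i)^-1 * (l i).1), to_kernel ((Y i)^-1 * (l i).2))%g].

Lemma lift_diffK l : is_lift q a b l -> lift_of (lift_diff l) = l.
Proof.
case=> _ ql; apply/ffunP => i; rewrite !ffunE /=; have [qla qlb] := ql i.
rewrite !val_to_kernel ?mulKVg -?surjective_pairing //.
- by rewrite qM (homV qM) qlb qY mulVg.
- by rewrite qM (homV qM) qla qX mulVg.
Qed.

Lemma lift_of_inj : injective lift_of.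
Proof.
move=> s t /ffunP st; apply/ffunP => i; move: (st i); rewrite !ffunE.
case=> /mulgI/val_inj s1 /mulgI/val_inj s2.
by rewrite [s i]surjective_pairing [t i]surjective_pairing s1 s2.
Qed.

Lemma in_comm_change_map u : in_comm u <-> exists s, change_map s = u.
Proof.
split=> [cu | [s <-]]; last exact: in_comm_lift_change.
have [c [e ce]] := comm_in_change_image cu; rewrite to_kernel_val in ce.
by exists [ffun i => (c i, e i)]; rewrite -ce; apply: eq_lift_change => i _; rewrite ffunE.
Qed.

Lemma exists_lift_iff_in_image_H2 :
  (exists l, is_lift q a b l) <-> in_image_H2 q (surface_class a b).
Proof.
split=> [[l] | /in_image_H2_in_comm/in_commN/in_comm_change_map [s cs]].
  exact: lift_in_image_H2.
by exists (lift_of s); apply/is_lift_of.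
Qed.

Lemma card_lifts l0 :
  is_lift q a b l0 -> card_is (is_lift q a b) #|[set s | change_map s == 0]|.
Proof.
move=> l0_lift.
exists [seq lift_of s | s <- enum [set s | change_map s == - to_kernel relator]]; split.
- by rewrite (map_inj_uniq lift_of_inj) enum_uniq.
- rewrite size_map -cardE.
  rewrite -(@card_additive_fibre lift_shift kernel _ change_mapD (lift_diff l0)).
  by apply: eq_card => s; rewrite !inE (is_lift_of (lift_diff l0)).1 ?lift_diffK.
move=> l; split=> [/mapP [s] | l_lift].
  by rewrite mem_enum inE => /eqP /is_lift_of sl ->.
apply/mapP; exists (lift_diff l); last by rewrite lift_diffK.
by rewrite mem_enum inE; apply/eqP/is_lift_of; rewrite lift_diffK.
Qed.

Lemma card_change_image n :
  card_is (gen_by kercomm) n -> #|[set change_map s | s : lift_shift]| = n.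
Proof.
case=> sM [sM_uniq <- mem_sM]; rewrite cardE -(size_map val).
apply/perm_size/uniq_perm => [||x]; first by rewrite (map_inj_uniq val_inj) enum_uniq.
  exact: sM_uniq.
apply/mapP/idP => [[u] | /mem_sM cx].
  rewrite mem_enum => /imsetP [s _ ->] ->; apply/mem_sM.
  exact: in_comm_lift_change.
exists (to_kernel x); last by rewrite val_to_kernel ?kercomm_kerq.
have [s <-] : exists s, change_map s = to_kernel x.
  by apply/in_comm_change_map; rewrite /in_comm val_to_kernel ?kercomm_kerq.
by rewrite mem_enum; apply: imset_f.
Qed.

Lemma card_lift_shift : uniq sG -> #|lift_shift| = (size sG ^ (2 * h))%N.
Proof.
by move=> sG_uniq; rewrite card_ffun card_prod card_ord card_seq_sub // mulnn expnM.
Qed.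

Lemma card_lifts_mul_comm n : uniq sG -> (exists l, is_lift q a b l) ->
  card_is (gen_by kercomm) n ->
  exists m, card_is (is_lift q a b) m /\ (m * n = size sG ^ (2 * h))%N.
Proof.
move=> sG_uniq [l0 l0_lift] comm_n; exists #|[set s | change_map s == 0]|.
split; first exact: card_lifts l0_lift.
rewrite -(card_change_image comm_n) mulnC -card_lift_shift //.
by rewrite [RHS](@card_additive_domain lift_shift kernel _ change_mapD).
Qed.

End Lifts.
End Kernel.

Theorem theorem3p1 (G G' : groupType) (q : G' -> G) (h : nat) (a b : 'I_h -> G) :
  (* q : G' -> G is an epimorphism with finite abelian kernel Gamma *)
  is_hom q ->
  (forall x : G, exists y : G', q y = x) ->
  (exists n, card_is (fun x : G' => q x = 1%g) n) ->
  (forall x y : G', q x = 1%g -> q y = 1%g -> (x * y = y * x)%g) ->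
  (* W has positive genus h; b = 2 - chi(W) = 2 h *)
  (0 < h)%N ->
  (* g : pi -> G is a homomorphism (a_i |-> a i, b_i |-> b i) ... *)
  surface_rel a b ->
  (* ... which is onto *)
  (forall x : G, gen_by (fun y => exists i, y = a i \/ y = b i) x) ->
  ((exists l, is_lift q a b l) <-> in_image_H2 q (surface_class a b)) /\
  ((exists l, is_lift q a b l) ->
   forall nGamma nComm : nat,
     card_is (fun x : G' => q x = 1%g) nGamma ->
     card_is (gen_by (fun x : G' => exists c y : G', q c = 1%g /\ x = [~ c, y]%g))
             nComm ->
     exists nHom : nat,
       card_is (is_lift q a b) nHom /\ (nHom * nComm = nGamma ^ (2 * h))%N).
Proof.
move=> qM q_surj [_ [sK [_ _ mem_sK]]] kerq_abelian _ rel_ab gen_ab.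
have qX i : q (sect q_surj (a i)) = a i by apply: sectK.
have qY i : q (sect q_surj (b i)) = b i by apply: sectK.
split.
  exact (exists_lift_iff_in_image_H2 qM kerq_abelian mem_sK q_surj qX qY rel_ab gen_ab).
move=> lifts _ nComm [sK' [sK'_uniq <- mem_sK']] comm_n.
exact (card_lifts_mul_comm qM kerq_abelian mem_sK' q_surj qX qY rel_ab gen_ab
         sK'_uniq lifts comm_n).
Qed.
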